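(* Let $L>0$, $D>0$, $\alpha\in[0,1]$, $\tau_{\rm acc}>0$, $\tau_{\rm m}>0$, $h_{\rm m}>0$, $\bar h_{\rm acc}>0$, and let $\tau_{\rm mix}$, $\bar h_{\rm mix}$, $\bar\rho$, $\bar v$ and $c_1,c_2,c_3,c_4$ be as defined in the context (with $\bar\rho,\bar v>0$). Consider, for $x\in[0,D]$, $t\ge0$, the open-loop system (i.e. with $\tilde h_{\rm acc}\equiv 0$) $$\tilde z_t(x,t)+\bar v\,\tilde z_x(x,t)=0,\qquad \tilde v_t(x,t)-c_4\tilde v_x(x,t)=-c_1e^{-\frac{c_2x}{\bar v}}\tilde z(x,t),$$ $$\tilde z(0,t)=-L\frac{\bar\rho^2}{\bar v}\tilde v(0,t),\qquad \tilde v_t(D,t)=-c_1e^{-\frac{c_2D}{\bar v}}\tilde z(D,t).$$ This system is exponentially unstable: there exist a real number $\sigma>0$ and a nontrivial pair of functions $(\phi,\psi)$ on $[0,D]$ such that $\tilde z(x,t)=e^{\sigma t}\phi(x)$, $\tilde v(x,t)=e^{\sigma t}\psi(x)$ is a solution.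
   Context: Definitions: $\tau_{\rm mix}=\left(\frac{\alpha}{\tau_{\rm acc}}+\frac{1-\alpha}{\tau_{\rm m}}\right)^{-1}$; $\bar h_{\rm mix}=\frac{\alpha+(1-\alpha)\frac{\tau_{\rm acc}}{\tau_{\rm m}}}{\alpha+(1-\alpha)\frac{\tau_{\rm acc}}{\tau_{\rm m}}\frac{\bar h_{\rm acc}}{h_{\rm m}}}\bar h_{\rm acc}$. Given a constant inflow $q_{\rm in}>0$ with $q_{\rm in}\bar h_{\rm mix}<1$, the equilibrium values are $\bar v=\frac{L}{\frac{1}{q_{\rm in}}-\bar h_{\rm mix}}$ and $\bar\rho=\frac{q_{\rm in}}{\bar v}$, so that $\bar v=q_{\rm in}/\bar\rho$ and $\frac1{\bar\rho}-L=\bar h_{\rm mix}\bar v$. Constants: $c_1=\frac{1}{\bar\rho^2\tau_{\rm mix}\bar h_{\rm mix}}$, $c_2=\frac{1}{\tau_{\rm mix}}$, $c_3=\frac{\alpha}{\tau_{\rm acc}\bar h_{\rm acc}^2}\left(\frac1{\bar\rho}-L\right)$, $c_4=\frac{L}{\bar h_{\rm mix}}$. (This system is the diagonalized linearization, around a uniform congested equilibrium, of an Aw–Rascle–Zhang-type traffic model in which $\tilde h_{\rm acc}$ is the deviation of the time-gap of ACC-equipped vehicles; $\tilde z=e^{c_2x/\bar v}(\tilde\rho+\bar h_{\rm mix}\bar\rho^2\tilde v)$.) *)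

From Stdlib Require Import Reals.
From Coquelicot Require Import Coquelicot.
Open Scope R_scope.

Definition tau_mix (alpha tau_acc tau_m : R) : R :=
  / (alpha / tau_acc + (1 - alpha) / tau_m).

Definition h_mix (alpha tau_acc tau_m h_m h_acc : R) : R :=
  (alpha + (1 - alpha) * (tau_acc / tau_m))
  / (alpha + (1 - alpha) * (tau_acc / tau_m) * (h_acc / h_m)) * h_acc.

Definition v_bar (L q_in hmix : R) : R := L / (/ q_in - hmix).
Definition rho_bar (L q_in hmix : R) : R := q_in / v_bar L q_in hmix.

Definition cst1 (rho tmix hmix : R) : R := / (rho ^ 2 * tmix * hmix).
Definition cst2 (tmix : R) : R := / tmix.
Definition cst3 (alpha tau_acc h_acc rho L : R) : R :=
  alpha / (tau_acc * h_acc ^ 2) * (/ rho - L).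
Definition cst4 (L hmix : R) : R := L / hmix.

(* The transport equation forces
   φ(x) = A e^{-σx/v̄}; the v-equation is then a linear ODE whose solutions are
   ψ(x) = B e^{bx} + C e^{-ax} with a = (σ + c₂)/v̄ and b = σ/c₄. Normalising C = 1,
   the boundary condition at x = D fixes B and the one at x = 0 fixes A, which leaves
   a single scalar equation G(σ) = 0 for the growth rate. G is continuous, negative
   at σ = 0 and positive at σ = c₁ L ρ̄²/v̄, so the intermediate value theorem gives a
   root σ > 0. *)

From Stdlib Require Import Reals Lra Psatz.
From Coquelicot Require Import Coquelicot.
Open Scope R_scope.

Lemma convex_comb_pos (alpha x y : R) :
  0 <= alpha <= 1 -> 0 < x -> 0 < y -> 0 < alpha * x + (1 - alpha) * y.
Proof.
  intros Ha Hx Hy.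
  destruct (Rle_lt_dec alpha (1 / 2)); nra.
Qed.

Lemma h_mix_pos (alpha tau_acc tau_m h_m h_acc : R) :
  0 <= alpha <= 1 -> 0 < tau_acc -> 0 < tau_m -> 0 < h_m -> 0 < h_acc ->
  0 < h_mix alpha tau_acc tau_m h_m h_acc.
Proof.
  intros Ha Htacc Htm Hhm Hhacc. unfold h_mix.
  assert (Hr : 0 < tau_acc / tau_m) by (apply Rdiv_lt_0_compat; lra).
  assert (Hs : 0 < h_acc / h_m) by (apply Rdiv_lt_0_compat; lra).
  pose proof (convex_comb_pos alpha 1 (tau_acc / tau_m) Ha Rlt_0_1 Hr).
  pose proof (convex_comb_pos alpha 1 (tau_acc / tau_m * (h_acc / h_m)) Ha Rlt_0_1
                (Rmult_lt_0_compat _ _ Hr Hs)).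
  apply Rmult_lt_0_compat; [apply Rdiv_lt_0_compat|]; [nra | nra | lra].
Qed.

Lemma tau_mix_pos (alpha tau_acc tau_m : R) :
  0 <= alpha <= 1 -> 0 < tau_acc -> 0 < tau_m -> 0 < tau_mix alpha tau_acc tau_m.
Proof.
  intros Ha Htacc Htm. unfold tau_mix, Rdiv.
  apply Rinv_0_lt_compat, convex_comb_pos; auto using Rinv_0_lt_compat.
Qed.

Lemma v_bar_pos (L q_in hmix : R) :
  0 < L -> 0 < q_in -> q_in * hmix < 1 -> 0 < v_bar L q_in hmix.
Proof.
  intros HL Hq Hqh. unfold v_bar.
  replace (/ q_in - hmix) with ((1 - q_in * hmix) / q_in) by (field; lra).
  apply Rdiv_lt_0_compat; [lra|]. apply Rdiv_lt_0_compat; lra.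
Qed.

Lemma rho_bar_pos (L q_in hmix : R) :
  0 < L -> 0 < q_in -> q_in * hmix < 1 -> 0 < rho_bar L q_in hmix.
Proof.
  intros HL Hq Hqh. unfold rho_bar.
  apply Rdiv_lt_0_compat; [lra|]. now apply v_bar_pos.
Qed.

Lemma is_derive_exp_time (sigma y t : R) :
  is_derive (fun s => exp (sigma * s) * y) t (sigma * (exp (sigma * t) * y)).
Proof. auto_derive; [trivial | ring]. Qed.

Lemma exponential_ansatz_solves (vb k1 k2 k4 gamma D sigma : R) (phi psi : R -> R) :
  (forall x, ex_derive phi x) -> (forall x, ex_derive psi x) ->
  (forall x, sigma * phi x + vb * Derive phi x = 0) ->
  (forall x, sigma * psi x - k4 * Derive psi x = - k1 * exp (- (k2 * x / vb)) * phi x) ->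
  phi 0 = gamma * psi 0 ->
  sigma * psi D = - k1 * exp (- (k2 * D / vb)) * phi D ->
  let z := fun x t => exp (sigma * t) * phi x in
  let v := fun x t => exp (sigma * t) * psi x in
  (forall x t, 0 <= x <= D -> 0 <= t ->
     ex_derive (fun s => z x s) t /\ ex_derive (fun y => z y t) x /\
     ex_derive (fun s => v x s) t /\ ex_derive (fun y => v y t) x /\
     Derive (fun s => z x s) t + vb * Derive (fun y => z y t) x = 0 /\
     Derive (fun s => v x s) t - k4 * Derive (fun y => v y t) x
       = - k1 * exp (- (k2 * x / vb)) * z x t) /\
  (forall t, 0 <= t ->
     z 0 t = gamma * v 0 t /\
     Derive (fun s => v D s) t = - k1 * exp (- (k2 * D / vb)) * z D t).
Proof.
  intros Hphi Hpsi Htransport Hbalance H0 HD z v. unfold z, v.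
  assert (Htime : forall y t, Derive (fun s => exp (sigma * s) * y) t
                              = sigma * (exp (sigma * t) * y))
    by (intros; apply is_derive_unique, is_derive_exp_time).
  split.
  - intros x t _ _.
    rewrite !Htime, !Derive_scal.
    assert (Hz : ex_derive (fun s => exp (sigma * s) * phi x) t)
      by (eexists; apply is_derive_exp_time).
    assert (Hv : ex_derive (fun s => exp (sigma * s) * psi x) t)
      by (eexists; apply is_derive_exp_time).
    do 4 (split; [auto using ex_derive_scal|]). split.
    + transitivity (exp (sigma * t) * (sigma * phi x + vb * Derive phi x)); [ring|].
      rewrite Htransport. ring.
    + transitivity (exp (sigma * t) * (sigma * psi x - k4 * Derive psi x)); [ring|].
      rewrite Hbalance. ring.
  - intros t _. rewrite Htime, H0. split; [ring|].
    transitivity (exp (sigma * t) * (sigma * psi D)); [ring|].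
    rewrite HD. ring.
Qed.

Section UnstableMode.

Variables vb k1 k2 k4 c D : R.
Hypotheses (Hvb : 0 < vb) (Hk1 : 0 < k1) (Hk2 : 0 < k2) (Hk4 : 0 < k4)
  (Hc : 0 < c) (HD : 0 < D).

Definition rate_a (sigma : R) : R := (sigma + k2) / vb.
Definition rate_b (sigma : R) : R := sigma / k4.

Definition amp_z (sigma : R) : R := - (sigma + k4 * rate_a sigma) / k1.
Definition amp_v (sigma : R) : R :=
  rate_a sigma * exp (- (rate_a sigma + rate_b sigma) * D) / rate_b sigma.

Definition mode_z (sigma x : R) : R := amp_z sigma * exp (- (sigma / vb) * x).
Definition mode_v (sigma x : R) : R :=
  amp_v sigma * exp (rate_b sigma * x) + exp (- rate_a sigma * x).

(* [sigma] times the defect of the boundary condition at [x = 0]; the factor [sigma]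
   removes the pole of [amp_v] at [sigma = 0]. *)
Definition dispersion (sigma : R) : R :=
  sigma * (sigma + k4 * rate_a sigma - k1 * c)
  - k1 * c * k4 * rate_a sigma * exp (- (rate_a sigma + rate_b sigma) * D).

Lemma rate_a_pos (sigma : R) : 0 <= sigma -> 0 < rate_a sigma.
Proof. intros. apply Rdiv_lt_0_compat; lra. Qed.

Lemma k4_rate_b (sigma : R) : k4 * rate_b sigma = sigma.
Proof. unfold rate_b. field. lra. Qed.

Lemma dispersion_continuous : continuity dispersion.
Proof.
  intro x. apply continuity_pt_filterlim.
  apply (@ex_derive_continuous R_AbsRing R_NormedModule).
  unfold dispersion, rate_a, rate_b. auto_derive. lra.
Qed.

Lemma dispersion_0_neg : dispersion 0 < 0.
Proof.
  unfold dispersion. rewrite Rmult_0_l.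
  assert (0 < k1 * c * k4 * rate_a 0 * exp (- (rate_a 0 + rate_b 0) * D)).
  { apply Rmult_lt_0_compat; [|apply exp_pos].
    apply Rmult_lt_0_compat; [|apply rate_a_pos, Rle_refl].
    repeat apply Rmult_lt_0_compat; assumption. }
  lra.
Qed.

Lemma dispersion_pos (sigma : R) : k1 * c <= sigma -> 0 < dispersion sigma.
Proof.
  intros Hs.
  assert (HK : 0 < k1 * c) by (apply Rmult_lt_0_compat; assumption).
  assert (Ha : 0 < rate_a sigma) by (apply rate_a_pos; lra).
  assert (Hb : 0 < rate_b sigma) by (apply Rdiv_lt_0_compat; lra).
  assert (He : exp (- (rate_a sigma + rate_b sigma) * D) < 1).
  { rewrite <- exp_0. apply exp_increasing. nra. }
  replace (dispersion sigma) with
    ((sigma - k1 * c) * (sigma + k4 * rate_a sigma)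
     + k1 * c * (k4 * rate_a sigma) * (1 - exp (- (rate_a sigma + rate_b sigma) * D)))
    by (unfold dispersion; ring).
  apply Rplus_le_lt_0_compat.
  - apply Rmult_le_pos; nra.
  - apply Rmult_lt_0_compat; [apply Rmult_lt_0_compat; [|apply Rmult_lt_0_compat]|]; lra.
Qed.

Lemma dispersion_root : exists sigma, 0 < sigma /\ dispersion sigma = 0.
Proof.
  assert (HK : 0 < k1 * c) by nra.
  destruct (IVT dispersion 0 (k1 * c) dispersion_continuous HK dispersion_0_neg
              (dispersion_pos _ (Rle_refl _))) as [sigma [[[Hpos | <-] _] Hroot]].
  - now exists sigma.
  - pose proof dispersion_0_neg. lra.
Qed.

Lemma mode_z_0_neg (sigma : R) : 0 < sigma -> mode_z sigma 0 < 0.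
Proof.
  intros Hs. unfold mode_z, amp_z. rewrite Rmult_0_r, exp_0, Rmult_1_r.
  pose proof (rate_a_pos sigma (Rlt_le _ _ Hs)).
  assert (0 < (sigma + k4 * rate_a sigma) / k1) by (apply Rdiv_lt_0_compat; nra).
  unfold Rdiv in *. lra.
Qed.

Lemma is_derive_mode_z (sigma x : R) :
  is_derive (mode_z sigma) x (- (sigma / vb) * mode_z sigma x).
Proof. unfold mode_z. auto_derive; [trivial | ring]. Qed.

Lemma is_derive_mode_v (sigma x : R) :
  is_derive (mode_v sigma) x
    (rate_b sigma * (amp_v sigma * exp (rate_b sigma * x))
     - rate_a sigma * exp (- rate_a sigma * x)).
Proof. unfold mode_v. auto_derive; [trivial | ring]. Qed.

Lemma mode_z_transport (sigma x : R) :
  sigma * mode_z sigma x + vb * Derive (mode_z sigma) x = 0.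
Proof.
  rewrite (is_derive_unique _ _ _ (is_derive_mode_z sigma x)). field. lra.
Qed.

Lemma exp_mul_rate_a (sigma x : R) :
  exp (- (k2 * x / vb)) * exp (- (sigma / vb) * x) = exp (- rate_a sigma * x).
Proof. rewrite <- exp_plus. f_equal. unfold rate_a. field. lra. Qed.

Lemma source_mode_z (sigma x : R) :
  - k1 * exp (- (k2 * x / vb)) * mode_z sigma x
  = (sigma + k4 * rate_a sigma) * exp (- rate_a sigma * x).
Proof.
  unfold mode_z, amp_z. rewrite <- (exp_mul_rate_a sigma x). field. lra.
Qed.

Lemma mode_v_balance (sigma x : R) :
  sigma * mode_v sigma x - k4 * Derive (mode_v sigma) x
  = - k1 * exp (- (k2 * x / vb)) * mode_z sigma x.
Proof.
  rewrite (is_derive_unique _ _ _ (is_derive_mode_v sigma x)), source_mode_z.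
  unfold mode_v. pose proof (k4_rate_b sigma) as Hb.
  set (a := rate_a sigma) in *. set (b := rate_b sigma) in *. set (B := amp_v sigma).
  clearbody a b B. subst sigma. ring.
Qed.

Lemma mode_v_boundary_D (sigma : R) : 0 < sigma ->
  sigma * mode_v sigma D = - k1 * exp (- (k2 * D / vb)) * mode_z sigma D.
Proof.
  intros Hs. rewrite source_mode_z. unfold mode_v, amp_v.
  assert (Hexp : exp (- (rate_a sigma + rate_b sigma) * D) * exp (rate_b sigma * D)
                 = exp (- rate_a sigma * D))
    by (rewrite <- exp_plus; f_equal; ring).
  rewrite <- Hexp.
  assert (Hbpos : 0 < rate_b sigma) by (apply Rdiv_lt_0_compat; lra).
  pose proof (k4_rate_b sigma) as Hb.
  set (a := rate_a sigma) in *. set (b := rate_b sigma) in *.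
  set (E := exp (- (a + b) * D)). set (F := exp (b * D)).
  clearbody a b E F. subst sigma. field. lra.
Qed.

Lemma mode_boundary_0 (sigma : R) : 0 < sigma -> dispersion sigma = 0 ->
  mode_z sigma 0 = - c * mode_v sigma 0.
Proof.
  intros Hs Hroot. unfold mode_z, mode_v, amp_z.
  rewrite !Rmult_0_r, exp_0.
  assert (Hchar : sigma + k4 * rate_a sigma = k1 * c * (1 + amp_v sigma)).
  { unfold dispersion in Hroot. unfold amp_v.
    assert (Hbpos : 0 < rate_b sigma) by (apply Rdiv_lt_0_compat; lra).
    pose proof (k4_rate_b sigma) as Hb.
    set (a := rate_a sigma) in *. set (b := rate_b sigma) in *.
    set (E := exp (- (a + b) * D)) in *.
    clearbody a b E. subst sigma.
    apply Rmult_eq_reg_l with (k4 * b); [|nra].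
    transitivity (k4 * b * (k4 * b + k4 * a - k1 * c) + k4 * b * (k1 * c)); [ring|].
    replace (k4 * b * (k4 * b + k4 * a - k1 * c)) with (k1 * c * k4 * a * E) by lra.
    field. lra. }
  rewrite Hchar. field. lra.
Qed.

End UnstableMode.

Theorem proposition1
  (L D alpha tau_acc tau_m h_m h_acc q_in : R)
  (HL : 0 < L) (HD : 0 < D) (Ha0 : 0 <= alpha) (Ha1 : alpha <= 1)
  (Htacc : 0 < tau_acc) (Htm : 0 < tau_m) (Hhm : 0 < h_m) (Hhacc : 0 < h_acc)
  (Hq : 0 < q_in)
  (Hqh : q_in * h_mix alpha tau_acc tau_m h_m h_acc < 1) :
  let tmix := tau_mix alpha tau_acc tau_m in
  let hmix := h_mix alpha tau_acc tau_m h_m h_acc in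
  let vb := v_bar L q_in hmix in
  let rb := rho_bar L q_in hmix in
  let k1 := cst1 rb tmix hmix in
  let k2 := cst2 tmix in
  let k4 := cst4 L hmix in
  exists (sigma : R) (phi psi : R -> R),
    0 < sigma /\
    (exists x, 0 <= x <= D /\ (phi x <> 0 \/ psi x <> 0)) /\
    let z := fun x t => exp (sigma * t) * phi x in
    let v := fun x t => exp (sigma * t) * psi x in
    (* the PDEs hold on [0,D] x [0,oo) in the classical sense *)
    (forall x t, 0 <= x <= D -> 0 <= t ->
       ex_derive (fun s => z x s) t /\ ex_derive (fun y => z y t) x /\
       ex_derive (fun s => v x s) t /\ ex_derive (fun y => v y t) x /\
       Derive (fun s => z x s) t + vb * Derive (fun y => z y t) x = 0 /\
       Derive (fun s => v x s) t - k4 * Derive (fun y => v y t) x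
         = - k1 * exp (- (k2 * x / vb)) * z x t) /\
    (* boundary conditions *)
    (forall t, 0 <= t ->
       z 0 t = - L * (rb ^ 2 / vb) * v 0 t /\
       Derive (fun s => v D s) t = - k1 * exp (- (k2 * D / vb)) * z D t).
Proof.
  intros tmix hmix vb rb k1 k2 k4.
  assert (Hhmix : 0 < hmix) by (apply h_mix_pos; auto).
  assert (Htmix : 0 < tmix) by (apply tau_mix_pos; auto).
  assert (Hvb : 0 < vb) by (apply v_bar_pos; auto).
  assert (Hrb : 0 < rb) by (apply rho_bar_pos; auto).
  assert (Hk1 : 0 < k1).
  { apply Rinv_0_lt_compat, Rmult_lt_0_compat, Hhmix.
    apply Rmult_lt_0_compat, Htmix. now apply pow_lt. }
  assert (Hk2 : 0 < k2) by (apply Rinv_0_lt_compat; lra).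
  assert (Hk4 : 0 < k4) by (apply Rdiv_lt_0_compat; lra).
  assert (Hc : 0 < L * (rb ^ 2 / vb))
    by (apply Rmult_lt_0_compat, Rdiv_lt_0_compat; auto using pow_lt).
  destruct (dispersion_root vb k1 k2 k4 _ D Hvb Hk1 Hk2 Hk4 Hc HD) as [sigma [Hs Hroot]].
  exists sigma, (mode_z vb k1 k2 k4 sigma), (mode_v vb k2 k4 D sigma).
  split; [exact Hs|]. split.
  - exists 0. split; [lra|]. left. apply Rlt_not_eq, mode_z_0_neg; lra.
  - apply exponential_ansatz_solves.
    + intro x. eexists. apply is_derive_mode_z.
    + intro x. eexists. apply is_derive_mode_v.
    + intro x. apply mode_z_transport. lra.
    + intro x. apply mode_v_balance; lra.
    + rewrite <- Ropp_mult_distr_l. apply mode_boundary_0; lra.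
    + apply mode_v_boundary_D; lra.
Qed.
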